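(* Let $n_1,n_2,n_3$ be integers with $3\le n_1,n_2\le n_3$, let $W$ be a basic landmark system for $K(\mathbf{n})$, and let $u=(n_1+1,n_2+1,n_3+1)$. Then $W\cup\{u\}$ is a resolving set of $K(\mathbf{n}+\mathbf{1})=K_{n_1+1}\times K_{n_2+1}\times K_{n_3+1}$ if and only if the landmark graph $\mathcal{G}(W)$ contains no bad $4$-cycle, no plain hex, and no rainbow $2$-$2$-triangle.
   Context: $K(\mathbf{n})=K_{n_1}\times K_{n_2}\times K_{n_3}$ is the direct product of complete graphs: vertices are triples $(x_1,x_2,x_3)$, $1\le x_i\le n_i$, adjacent iff they differ in every coordinate. A set $W$ of vertices is resolving if for every two distinct vertices $x,y\notin W$ some $w\in W$ has $d(x,w)\neq d(y,w)$ ($d$ = graph distance). Landmark graph: $W_{i,a}=\{w\in W: w_i=a\}$; $\mathcal{G}(W)$ is the hypergraph on $W$ whose hyperedges are the nonempty $W_{i,a}$, each colored $i$. A stick is a hyperedge with exactly two vertices, poofy if at least three. Basic landmark system for $K(\mathbf{n})$: a vertex set $W$ such that (1) $W_{i,a}\neq\emptyset$ for all $i\in\{1,2,3\}$, $1\le a\le n_i$; (2) $|W_{i,a}|\ge 2$ for all such $i,a$; (3) $|W_{i,a}\cap W_{j,b}|\le 1$ whenever $i\ne j$. Bad $4$-cycle: distinct $w_1,\dots,w_4\in W$ and $\{i,j,k\}=\{1,2,3\}$ such that $\{w_1,w_2\}$, $\{w_3,w_4\}$ are hyperedges of color $i$, $w_2,w_3$ lie in a common hyperedge of color $j$, and $w_4,w_1$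 lie in a common hyperedge of color $k$. Plain hex: distinct $w_1,\dots,w_6\in W$ and an ordering $(i,j,k)$ of $\{1,2,3\}$ with $\{w_1,w_2\},\{w_4,w_5\}$ hyperedges of color $i$, $\{w_2,w_3\},\{w_5,w_6\}$ of color $j$, $\{w_3,w_4\},\{w_6,w_1\}$ of color $k$. Rainbow $2$-$2$-triangle: distinct $w_1,w_2,w_3\in W$ and $\{i,j,k\}=\{1,2,3\}$ with $\{w_1,w_2\}$ a hyperedge of color $i$, $\{w_2,w_3\}$ a hyperedge of color $j$, and $w_1,w_3$ in a common hyperedge of color $k$. *)

From mathcomp Require Import all_boot.
Set Implicit Arguments. Unset Strict Implicit. Unset Printing Implicit Defensive.

(* Vertices of K(n1,n2,n3): triples of ordinals; the value a : 'I_n encodes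
   the paper's coordinate a+1 (0-based indexing). *)
Definition vtx (n1 n2 n3 : nat) : finType := ('I_n1 * 'I_n2 * 'I_n3)%type.

(* i-th coordinate (i = 0,1,2 stands for the paper's 1,2,3), as a nat *)
Definition crd n1 n2 n3 (x : vtx n1 n2 n3) (i : 'I_3) : nat :=
  match nat_of_ord i with
  | 0 => nat_of_ord x.1.1
  | 1 => nat_of_ord x.1.2
  | _ => nat_of_ord x.2
  end.

Definition nsz (n1 n2 n3 : nat) (i : 'I_3) : nat :=
  match nat_of_ord i with 0 => n1 | 1 => n2 | _ => n3 end.

Definition Kadj n1 n2 n3 : rel (vtx n1 n2 n3) :=
  fun x y => [forall i : 'I_3, crd x i != crd y i].

Fixpoint walk (T : finType) (e : rel T) (k : nat) (x y : T) : bool :=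
  match k with
  | 0 => x == y
  | k'.+1 => [exists z, e x z && walk e k' z y]
  end.

(* graph distance: Some (length of a shortest walk), None if unreachable.
   A shortest walk has length < #|T|, so searching in [0, #|T|) suffices. *)
Definition gdist (T : finType) (e : rel T) (x y : T) : option nat :=
  let s := iota 0 #|T| in
  if has (fun k => walk e k x y) s then Some (find (fun k => walk e k x y) s)
  else None.

Definition resolving (T : finType) (e : rel T) (W : {set T}) : Prop :=
  forall x y : T, x \notin W -> y \notin W -> x <> y ->
    exists2 w, w \in W & gdist e x w <> gdist e y w.

Definition Wia n1 n2 n3 (W : {set vtx n1 n2 n3}) (i : 'I_3) (a : nat)
  : {set vtx n1 n2 n3} := [set w in W | crd w i == a].

Definition basic_landmark n1 n2 n3 (W : {set vtx n1 n2 n3}) : Prop :=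
  (forall (i : 'I_3) (a : nat), a < nsz n1 n2 n3 i -> Wia W i a != set0) /\
  (forall (i : 'I_3) (a : nat), a < nsz n1 n2 n3 i -> 2 <= #|Wia W i a|) /\
  (forall (i j : 'I_3) (a b : nat), i != j -> #|Wia W i a :&: Wia W j b| <= 1).

(* S is a hyperedge of color i of the landmark graph G(W) *)
Definition hedge n1 n2 n3 (W : {set vtx n1 n2 n3}) (i : 'I_3)
  (S : {set vtx n1 n2 n3}) : Prop :=
  exists a : nat, Wia W i a = S /\ S != set0.

Definition stick n1 n2 n3 (W : {set vtx n1 n2 n3}) (i : 'I_3) (x y : vtx n1 n2 n3)
  : Prop := hedge W i [set x; y].

Definition cohedge n1 n2 n3 (W : {set vtx n1 n2 n3}) (i : 'I_3) (x y : vtx n1 n2 n3)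
  : Prop := exists S, hedge W i S /\ x \in S /\ y \in S.

Definition bad4cycle n1 n2 n3 (W : {set vtx n1 n2 n3}) : Prop :=
  exists (w1 w2 w3 w4 : vtx n1 n2 n3) (i j k : 'I_3),
    [/\ uniq [:: w1; w2; w3; w4], all (mem W) [:: w1; w2; w3; w4],
        uniq [:: i; j; k] &
        [/\ stick W i w1 w2, stick W i w3 w4, cohedge W j w2 w3 & cohedge W k w4 w1]].

Definition plainhex n1 n2 n3 (W : {set vtx n1 n2 n3}) : Prop :=
  exists (w1 w2 w3 w4 w5 w6 : vtx n1 n2 n3) (i j k : 'I_3),
    [/\ uniq [:: w1; w2; w3; w4; w5; w6], all (mem W) [:: w1; w2; w3; w4; w5; w6],
        uniq [:: i; j; k] &
        [/\ stick W i w1 w2, stick W i w4 w5, stick W j w2 w3, stick W j w5 w6 &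
            (stick W k w3 w4 /\ stick W k w6 w1)]].

Definition rainbow_tri n1 n2 n3 (W : {set vtx n1 n2 n3}) : Prop :=
  exists (w1 w2 w3 : vtx n1 n2 n3) (i j k : 'I_3),
    [/\ uniq [:: w1; w2; w3], all (mem W) [:: w1; w2; w3],
        uniq [:: i; j; k] &
        [/\ stick W i w1 w2, stick W j w2 w3 & cohedge W k w1 w3]].

Definition emb n1 n2 n3 (x : vtx n1 n2 n3) : vtx n1.+1 n2.+1 n3.+1 :=
  (widen_ord (leqnSn n1) x.1.1, widen_ord (leqnSn n2) x.1.2,
   widen_ord (leqnSn n3) x.2).

(* u = (n1+1, n2+1, n3+1) in 1-based coordinates *)
Definition ucorner n1 n2 n3 : vtx n1.+1 n2.+1 n3.+1 := (ord_max, ord_max, ord_max).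

From mathcomp Require Import all_boot zify.
Set Implicit Arguments. Unset Strict Implicit. Unset Printing Implicit Defensive.

(* Every factor of K(n+1) has at least three vertices, so distinct vertices are
   at distance 1 or 2 and W ∪ {u} resolves x, y iff some landmark is adjacent
   to exactly one of them; a vertex is adjacent to a landmark iff it agrees with
   it in no coordinate.  For an unresolved pair x, y and a colour i with
   x_i ≠ y_i, every landmark of W_{i,x_i} agrees with y in another colour,
   and the axioms of a basic landmark system make W_{i,x_i} a stick with one
   end in W_{j,y_j} and the other in W_{k,y_k}.  Comparing these sticks
   according to the number of colours where x and y differ, and to whether
   they use the new value n_i + 1, produces a bad 4-cycle, a plain hex or a
   rainbow 2-2-triangle.  Conversely each of these configurations yields an
   explicit unresolved pair. *)

Lemma uniq3P (T : eqType) (a b c : T) :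
  uniq [:: a; b; c] = [&& a != b, a != c & b != c].
Proof. by rewrite /= !inE negb_or andbT andbA. Qed.

Lemma uniq3_neq (T : eqType) (a b c : T) :
  uniq [:: a; b; c] -> [/\ a != b, a != c & b != c].
Proof. by rewrite uniq3P => /and3P. Qed.

Lemma uniq3_swap12 (T : eqType) (a b c : T) : uniq [:: a; b; c] -> uniq [:: b; a; c].
Proof. by rewrite !uniq3P => /and3P[H -> ->]; rewrite eq_sym H. Qed.

Lemma uniq3_swap23 (T : eqType) (a b c : T) : uniq [:: a; b; c] -> uniq [:: a; c; b].
Proof. by rewrite !uniq3P => /and3P[-> -> H]; rewrite eq_sym H. Qed.

Lemma uniq3_rot (T : eqType) (a b c : T) : uniq [:: a; b; c] -> uniq [:: c; a; b].
Proof. by move=> /uniq3_swap23 /uniq3_swap12. Qed.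

Lemma ord3_cases (i j k l : 'I_3) : uniq [:: i; j; k] -> [\/ l = i, l = j | l = k].
Proof.
move: i j k l; do 4! case=> [[|[|[|?]]] ?] //=;
  try (by constructor 1; apply/val_inj); try (by constructor 2; apply/val_inj);
  by constructor 3; apply/val_inj.
Qed.

Lemma ord3_complete (i : 'I_3) : exists j k : 'I_3, uniq [:: i; j; k].
Proof.
case: i => [[|[|[|?]]] ?] //.
- by exists (inord 1), (inord 2); rewrite uniq3P -!val_eqE /= !inordK.
- by exists (inord 0), (inord 2); rewrite uniq3P -!val_eqE /= !inordK.
- by exists (inord 0), (inord 1); rewrite uniq3P -!val_eqE /= !inordK.
Qed.

Lemma exists_ord3 (P : pred 'I_3) (i j k : 'I_3) : uniq [:: i; j; k] ->
  [exists l, P l] = [|| P i, P j | P k].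
Proof.
move=> U; apply/existsP/idP; last by case/or3P=> H; [exists i | exists j | exists k].
by case=> l; case: (ord3_cases l U) => -> ->; rewrite ?orbT.
Qed.

Section Coordinates.
Variables n1 n2 n3 : nat.
Local Notation nz := (nsz n1 n2 n3).

Lemma crd_lt (w : vtx n1 n2 n3) l : crd w l < nz l.
Proof. by case: w => [[a b] c]; case: l => [[|[|[|?]]] ?]; rewrite /crd /nsz /= ?ltn_ord. Qed.

Lemma crd_inj (x y : vtx n1 n2 n3) : crd x =1 crd y -> x = y.
Proof.
case: x => [[a b] c]; case: y => [[a' b'] c'] H.
have := H (inord 0); have := H (inord 1); have := H (inord 2).
by rewrite /crd !inordK //= => /val_inj-> /val_inj-> /val_inj->.
Qed.

Lemma crd_emb (w : vtx n1 n2 n3) l : crd (emb w) l = crd w l.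
Proof. by case: w => [[a b] c]; case: l => [[|[|[|?]]] ?]. Qed.

Lemma crd_ucorner l : crd (ucorner n1 n2 n3) l = nz l.
Proof. by case: l => [[|[|[|?]]] ?]. Qed.

Definition vtx_of (c : 'I_3 -> nat) : vtx n1.+1 n2.+1 n3.+1 :=
  (inord (c (inord 0)), inord (c (inord 1)), inord (c (inord 2))).

Lemma crd_vtx_of c l : c l <= nz l -> crd (vtx_of c) l = c l.
Proof.
have El : inord l = l by apply/val_inj; rewrite /= inordK.
by case: l El => [[|[|[|?]]] ?] //= El H; rewrite /crd /= El inordK.
Qed.

End Coordinates.

Lemma crd_le n1 n2 n3 (x : vtx n1.+1 n2.+1 n3.+1) l : crd x l <= nsz n1 n2 n3 l.
Proof. by have := crd_lt x l; case: l => [[|[|[|?]]] ?]. Qed.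

Lemma walk1 (T : finType) (e : rel T) x y : walk e 1 x y = e x y.
Proof.
apply/existsP/idP; first by case=> z /andP[H /eqP<-].
by move=> H; exists y; rewrite H eqxx.
Qed.

Lemma walk2 (T : finType) (e : rel T) x y : walk e 2 x y = [exists z, e x z && e z y].
Proof. by apply: eq_existsb => z; rewrite -(walk1 e z y). Qed.

Definition avoid2 (p q : nat) : nat :=
  if (0 != p) && (0 != q) then 0 else if (1 != p) && (1 != q) then 1 else 2.

Lemma avoid2P p q : [/\ avoid2 p q <= 2, avoid2 p q != p & avoid2 p q != q].
Proof. by rewrite /avoid2; case: p => [|[|[|p]]]; case: q => [|[|[|q]]]. Qed.

Lemma gdist_Kadj n1 n2 n3 (x y : vtx n1.+1 n2.+1 n3.+1) :
  2 <= n1 -> 2 <= n2 -> 2 <= n3 -> x != y ->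
  gdist (@Kadj n1.+1 n2.+1 n3.+1) x y = Some (if Kadj x y then 1 else 2).
Proof.
move=> h1 h2 h3 nxy.
have : 2 < #|vtx n1.+1 n2.+1 n3.+1| by rewrite /vtx !card_prod !card_ord; nia.
rewrite /gdist; case: #|_| => [|[|[|N]]] // _; rewrite [iota _ _]/= /has /find.
rewrite [walk _ 0 x y](negbTE nxy) walk1; case: (Kadj x y) => //.
suff -> : walk (@Kadj n1.+1 n2.+1 n3.+1) 2 x y by [].
rewrite walk2; apply/existsP; exists (vtx_of n1 n2 n3 (fun l => avoid2 (crd x l) (crd y l))).
have nz2 l : 2 <= nsz n1 n2 n3 l by case: l => [[|[|[|?]]] ?].
apply/andP; split; apply/forallP => l;
  have [le2 nx ny] := avoid2P (crd x l) (crd y l);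
  by rewrite crd_vtx_of ?(leq_trans le2) // eq_sym.
Qed.

Lemma setU2_absorb (T : finType) (p q : T) (B : {set T}) :
  p \in B -> q \in B -> [set p; q] :|: B = B.
Proof. by move=> pB qB; apply/setUidPr; rewrite subUset !sub1set pB qB. Qed.

Lemma setU2_absorbl (T : finType) (p q : T) (B : {set T}) :
  p \in B -> [set p; q] :|: B = q |: B.
Proof. by move=> pB; apply/setP => w; rewrite !inE; case: eqP => [->|] //=; rewrite pB orbT. Qed.

Lemma set2_disjoint (T : finType) (p q r s w : T) :
  p != r -> p != s -> q != r -> q != s -> w \in [set p; q] -> w \notin [set r; s].
Proof.
by move=> pr ps qr qs; rewrite !in_set2 => /orP[]/eqP->; rewrite negb_or ?pr ?ps ?qr ?qs.
Qed.

Definition coord3 (i j : 'I_3) (a b c : nat) (l : 'I_3) : nat :=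
  if l == i then a else if l == j then b else c.

Lemma coord3E i j k a b c : uniq [:: i; j; k] ->
  [/\ coord3 i j a b c i = a, coord3 i j a b c j = b & coord3 i j a b c k = c].
Proof.
move/uniq3_neq=> [ij ik jk]; rewrite /coord3 eqxx eq_sym (negbTE ij) eqxx.
by rewrite eq_sym (negbTE ik) eq_sym (negbTE jk).
Qed.

Lemma exists_coord3 (P : 'I_3 -> nat -> bool) i j k a b c : uniq [:: i; j; k] ->
  [exists l, P l (coord3 i j a b c l)] = [|| P i a, P j b | P k c].
Proof. by move=> U; have [ea eb ec] := coord3E a b c U; rewrite (exists_ord3 _ U) ea eb ec. Qed.

Section Landmarks.
Variables (n1 n2 n3 : nat) (W : {set vtx n1 n2 n3}).
Local Notation nz := (nsz n1 n2 n3).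
Local Notation T' := (vtx n1.+1 n2.+1 n3.+1).
Local Notation K' := (@Kadj n1.+1 n2.+1 n3.+1).
Local Notation W' := ([set emb w | w in W] :|: [set ucorner n1 n2 n3]).

Definition agreeing (c : 'I_3 -> nat) : {set vtx n1 n2 n3} :=
  [set w in W | [exists l, crd w l == c l]].

Definition agrees_corner (c : 'I_3 -> nat) : bool := [exists l, c l == nz l].

(* The vertices of K(n+1) with coordinates [cx] and [cy] are distinct and are
   not told apart by W ∪ {u} (see [Kadj_emb], [Kadj_ucorner]). *)
Definition twins (cx cy : 'I_3 -> nat) : Prop :=
  [/\ agreeing cx = agreeing cy, agrees_corner cx = agrees_corner cy & exists l, cx l != cy l].

Definition nonlandmark (c : 'I_3 -> nat) : Prop :=
  [/\ forall l, c l <= nz l, exists l, c l < nz l & forall w, w \in W -> ~ crd w =1 c].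

Lemma Kadj_emb (x : T') c w : crd x =1 c -> w \in W ->
  Kadj x (emb w) = (w \notin agreeing c).
Proof.
move=> Ex wW; rewrite inE wW negb_exists; apply: eq_forallb => l.
by rewrite crd_emb Ex eq_sym.
Qed.

Lemma Kadj_ucorner (x : T') c : crd x =1 c -> Kadj x (ucorner n1 n2 n3) = ~~ agrees_corner c.
Proof. by move=> Ex; rewrite negb_exists; apply: eq_forallb => l; rewrite crd_ucorner Ex. Qed.

Lemma vtx_of_notin c : nonlandmark c -> vtx_of n1 n2 n3 c \notin W'.
Proof.
case=> cle [l ltl] nW; rewrite !inE negb_or; apply/andP; split.
  by apply/imsetP=> -[w wW Ew]; apply: (nW w wW) => l'; rewrite -crd_emb -Ew crd_vtx_of.
apply/eqP => Eu; have := crd_vtx_of (cle l).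
by rewrite Eu crd_ucorner => El; rewrite -El ltnn in ltl.
Qed.

Lemma Wia_crd w i a : w \in Wia W i a -> crd w i = a.
Proof. by rewrite inE => /andP[_ /eqP]. Qed.

Lemma Wia_W w i a : w \in Wia W i a -> w \in W.
Proof. by rewrite inE => /andP[]. Qed.

Lemma Wia_lt w i a : w \in Wia W i a -> a < nz i.
Proof. by move=> /Wia_crd <-; apply: crd_lt. Qed.

Lemma Wia_top i : Wia W i (nz i) = set0.
Proof. by apply/setP => w; rewrite inE [w \in set0]inE (ltn_eqF (crd_lt w i)) andbF. Qed.

Lemma Wia_neq l a b p q : p \in Wia W l a -> q \in Wia W l b -> a != b -> p != q.
Proof. by move=> /Wia_crd <- /Wia_crd <-; apply: contra => /eqP->. Qed.

Lemma Wia_agreeing i c : Wia W i (c i) \subset agreeing c.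
Proof. by apply/subsetP => w; rewrite !inE => /andP[-> ci]; apply/existsP; exists i. Qed.

Lemma stick_mem i a p q : Wia W i a = [set p; q] -> p \in Wia W i a /\ q \in Wia W i a.
Proof. by move=> ->; rewrite set21 set22. Qed.

Lemma stick_Wia i a p q : Wia W i a = [set p; q] -> stick W i p q.
Proof. by move=> E; exists a; split=> //; apply/set0Pn; exists p; rewrite set21. Qed.

Lemma stick_sym i p q : stick W i p q -> stick W i q p.
Proof. by rewrite /stick setUC. Qed.

Lemma cohedge_Wia i a p q : p \in Wia W i a -> q \in Wia W i a -> cohedge W i p q.
Proof.
by move=> pi qi; exists (Wia W i a); split=> //; exists a; split=> //; apply/set0Pn; exists p.
Qed.

Hypothesis card_Wia_ge2 : forall (i : 'I_3) (a : nat), a < nz i -> 2 <= #|Wia W i a|.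
Hypothesis card_Wia_meet_le1 :
  forall (i j : 'I_3) (a b : nat), i != j -> #|Wia W i a :&: Wia W j b| <= 1.

Lemma Wia_meet_eq i j a b p q : i != j -> p \in Wia W i a -> p \in Wia W j b ->
  q \in Wia W i a -> q \in Wia W j b -> p = q.
Proof.
by move=> ij pi pj qi qj; apply: (card_le1_eqP (card_Wia_meet_le1 a b ij)); rewrite in_setI ?pi ?qi.
Qed.

(* Each landmark of W_{i,a} agrees with c in colour j or k, and the third axiom
   allows at most one landmark of W_{i,a} in each of W_{j,c j}, W_{k,c k}. *)
Lemma stick_of_agreeing c i j k a : uniq [:: i; j; k] -> a < nz i -> a != c i ->
  Wia W i a \subset agreeing c ->
  exists p q, [/\ p != q, Wia W i a = [set p; q], p \in Wia W j (c j) & q \in Wia W k (c k)].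
Proof.
move=> U lta nac sub; have [ij ik _] := uniq3_neq U.
set A := Wia W i a; set Aj := A :&: Wia W j (c j); set Ak := A :&: Wia W k (c k).
have EA : A = Aj :|: Ak.
  apply/eqP; rewrite eqEsubset subUset !subsetIl !andbT; apply/subsetP => w wA.
  move/subsetP/(_ w wA): sub; rewrite inE (exists_ord3 _ U) (Wia_crd wA) (negbTE nac) /=.
  by case/andP=> wW /orP[] cw; rewrite in_setU !in_setI wA !inE wW cw ?orbT.
have le2 : #|A| <= #|Aj| + #|Ak| by rewrite {1}EA; apply: (leq_card_setU _ _).1.
have ge2 : 2 <= #|A| := card_Wia_ge2 lta.
have lej : #|Aj| <= 1 := card_Wia_meet_le1 a (c j) ij.
have lek : #|Ak| <= 1 := card_Wia_meet_le1 a (c k) ik.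
have /cards1P[p Ep] : #|Aj| == 1 by apply/eqP; lia.
have /cards1P[q Eq] : #|Ak| == 1 by apply/eqP; lia.
have pj : p \in Wia W j (c j) by move: (set11 p); rewrite -Ep in_setI => /andP[].
have qk : q \in Wia W k (c k) by move: (set11 q); rewrite -Eq in_setI => /andP[].
exists p, q; split=> //; last by rewrite EA Ep Eq.
by apply: contraTneq ge2 => epq; rewrite EA Ep Eq epq setUid cards1.
Qed.

Lemma twins_stick cx cy i j k : agreeing cx = agreeing cy -> uniq [:: i; j; k] ->
  cx i < nz i -> cx i != cy i ->
  exists p q, [/\ p != q, Wia W i (cx i) = [set p; q],
                  p \in Wia W j (cy j) & q \in Wia W k (cy k)].
Proof. by move=> Eag U xi nxy; apply: stick_of_agreeing; rewrite // -Eag Wia_agreeing. Qed.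

Lemma rainbow_tri_of_sticks i j k a b c p q p' q' : uniq [:: i; j; k] ->
  p != q -> Wia W i a = [set p; q] -> p \in Wia W j b -> q \in Wia W k c ->
  p' != q' -> Wia W j b = [set p'; q'] -> p' \in Wia W i a -> q' \in Wia W k c ->
  rainbow_tri W.
Proof.
move=> U npq Ei pj qk npq' Ej p'i q'k; have [ij _ _] := uniq3_neq U.
have [pi qi] := stick_mem Ei; have [p'j q'j] := stick_mem Ej.
have epp : p' = p := Wia_meet_eq ij p'i p'j pi pj; subst p'.
have nqq' : q != q'.
  by apply: contraNneq npq => eqq; rewrite (Wia_meet_eq ij pi pj qi) // eqq.
exists q, p, q', i, j, k; split=> //.
- by rewrite /= !inE !negb_or eq_sym npq nqq' npq'.
- by rewrite /= (Wia_W qi) (Wia_W pi) (Wia_W q'k).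
- by split; [exact/stick_sym/(stick_Wia Ei) | exact: stick_Wia Ej | exact: cohedge_Wia qk q'k].
Qed.

(* Here [cy] can only agree with the corner in colour i.  If [cx] does in colour
   j, the stick W_{j,cy j} meets W_{i,cx i}; it closes a rainbow triangle when
   x_k = y_k, while x_k ≠ y_k would make W_{k,x_k} meet W_{i,n_i} = set0. *)
Lemma twins_corner_rainbow_tri cx cy i : agreeing cx = agreeing cy ->
  agrees_corner cx -> agrees_corner cy -> cx i < nz i -> cx i != cy i -> rainbow_tri W.
Proof.
move=> Eag tx ty xi nxy; have [j [k U]] := ord3_complete i.
have [p [q [npq Ei pj qk]]] := twins_stick Eag U xi nxy.
have [yj yk] := (Wia_lt pj, Wia_lt qk).
have yi : cy i = nz i.
  move: ty; rewrite /agrees_corner (exists_ord3 _ U) => /or3P[/eqP //|/eqP e|/eqP e].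
  - by rewrite e ltnn in yj.
  - by rewrite e ltnn in yk.
wlog xj : j k p q U npq Ei pj qk yj yk / cx j = nz j.
  move=> IH; move: tx; rewrite /agrees_corner (exists_ord3 _ U) => /or3P[/eqP e|/eqP|/eqP xk].
  - by rewrite e ltnn in xi.
  - exact: IH j k p q U npq Ei pj qk yj yk.
  by apply: (IH k j q p) => //; [apply: uniq3_swap23 | rewrite eq_sym | rewrite setUC].
have [p' [q' [npq' Ej p'i q'k]]] :=
  twins_stick (esym Eag) (uniq3_swap12 U) yj ltac:(by rewrite xj ltn_eqF).
have xk := Wia_lt q'k; case: (eqVneq (cx k) (cy k)) => [exk|nxk].
  by apply: (rainbow_tri_of_sticks U npq Ei pj qk npq' Ej p'i); rewrite -exk.
have [r [_ [_ _ ri _]]] := twins_stick Eag (uniq3_rot U) xk nxk.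
by move: (Wia_lt ri); rewrite yi ltnn.
Qed.

Lemma twins_one_diff_bad4cycle cx cy i j k : agreeing cx = agreeing cy -> uniq [:: i; j; k] ->
  cx i < nz i -> cy i < nz i -> cx i != cy i -> cx j = cy j -> cx k = cy k -> bad4cycle W.
Proof.
move=> Eag U xi yi nxy exj exk.
have [p [q [npq Ex pj qk]]] := twins_stick Eag U xi nxy.
have [p' [q' [npq' Ey p'j q'k]]] := twins_stick (esym Eag) U yi ltac:(by rewrite eq_sym).
have [[pi qi] [p'i q'i]] := (stick_mem Ex, stick_mem Ey).
have d1 := Wia_neq qi p'i nxy; have d2 := Wia_neq qi q'i nxy.
have d3 := Wia_neq pi p'i nxy; have d4 := Wia_neq pi q'i nxy.
exists q, p, p', q', i, j, k; split=> //.
- by rewrite /= !inE !negb_or eq_sym npq d1 d2 d3 d4 npq'.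
- by rewrite /= (Wia_W qi) (Wia_W pi) (Wia_W p'i) (Wia_W q'i).
- split; [exact/stick_sym/(stick_Wia Ex) | exact: stick_Wia Ey | |].
  + by apply: (cohedge_Wia pj); rewrite -exj.
  + by apply: (cohedge_Wia _ qk); rewrite -exk.
Qed.

Lemma twins_two_diff_rainbow_tri cx cy i j k : agreeing cx = agreeing cy -> uniq [:: i; j; k] ->
  cx i < nz i -> cy k < nz k -> cx i != cy i -> cx j = cy j -> cx k != cy k -> rainbow_tri W.
Proof.
move=> Eag U xi yk nxyi exj nxyk.
have [p [q [npq Ei pk qj]]] := twins_stick Eag (uniq3_swap23 U) xi nxyi.
have [r [s [nrs Ek ri sj]]] := twins_stick (esym Eag) (uniq3_rot U) yk ltac:(by rewrite eq_sym).
by apply: (rainbow_tri_of_sticks (uniq3_swap23 U) npq Ei pk qj nrs Ek ri); rewrite -exj.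
Qed.

Lemma plainhex_of_sticks i j k ai aj ak bi bj bk eij eik eji ejk eki ekj :
  uniq [:: i; j; k] -> ai != bi -> aj != bj -> ak != bk ->
  Wia W i ai = [set eij; eik] -> Wia W j aj = [set eji; ejk] -> Wia W k ak = [set eki; ekj] ->
  Wia W i bi = [set eji; eki] -> Wia W j bj = [set eij; ekj] -> Wia W k bk = [set eik; ejk] ->
  eij != eik -> eji != ejk -> eki != ekj -> eji != eki -> eij != ekj -> eik != ejk ->
  plainhex W.
Proof.
move=> U nai naj nak Xi Xj Xk Yi Yj Yk d1 d2 d3 d4 d5 d6.
have [eij_i eik_i] := stick_mem Xi; have [eji_j ejk_j] := stick_mem Xj.
have [eki_k ekj_k] := stick_mem Xk; have [eji_i eki_i] := stick_mem Yi.
have [eij_j ekj_j] := stick_mem Yj; have [eik_k ejk_k] := stick_mem Yk.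
exists eik, eij, ekj, eki, eji, ejk, i, j, k; split=> //.
- have nbj : bj != aj by rewrite eq_sym.
  have nbk : bk != ak by rewrite eq_sym.
  rewrite /= !inE !negb_or (eq_sym eik) d1 (Wia_neq eik_k ekj_k nbk) (Wia_neq eik_i eki_i nai).
  rewrite (Wia_neq eik_i eji_i nai) d6 d5 (Wia_neq eij_i eki_i nai) (Wia_neq eij_i eji_i nai).
  rewrite (Wia_neq eij_j ejk_j nbj) (eq_sym ekj) d3 (Wia_neq ekj_j eji_j nbj).
  by rewrite (Wia_neq ekj_j ejk_j nbj) (eq_sym eki) d4 (Wia_neq eki_k ejk_k nak) d2.
- by rewrite /= (Wia_W eik_i) (Wia_W eij_i) (Wia_W ekj_k) (Wia_W eki_k) (Wia_W eji_j) (Wia_W ejk_j).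
- split; [exact/stick_sym/(stick_Wia Xi) | exact/stick_sym/(stick_Wia Yi) |
         exact: stick_Wia Yj | exact: stick_Wia Xj | ].
  by split; [exact/stick_sym/(stick_Wia Xk) | exact/stick_sym/(stick_Wia Yk)].
Qed.

Lemma twins_three_diff_plainhex cx cy (i j k : 'I_3) :
  agreeing cx = agreeing cy -> uniq [:: i; j; k] ->
  (forall l, cx l < nz l) -> (forall l, cy l < nz l) -> (forall l, cx l != cy l) -> plainhex W.
Proof.
move=> Eag U ltx lty nxy; have nyx l : cy l != cx l by rewrite eq_sym.
have Uji := uniq3_swap12 U; have Ukij := uniq3_rot U.
have [ij ik jk] := uniq3_neq U.
have [eij [eik [d1 Xi eij_j eik_k]]] := twins_stick Eag U (ltx i) (nxy i).
have [eji [ejk [d2 Xj eji_i ejk_k]]] := twins_stick Eag Uji (ltx j) (nxy j).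
have [eki [ekj [d3 Xk eki_i ekj_j]]] := twins_stick Eag Ukij (ltx k) (nxy k).
have [eij_i _] := stick_mem Xi; have [_ eik_i] := stick_mem Xi.
have [eji_j ejk_j] := stick_mem Xj; have [eki_k ekj_k] := stick_mem Xk.
have [f1 [f2 [d4 Yi f1_j f2_k]]] := twins_stick (esym Eag) U (lty i) (nyx i).
have [g1 [g2 [d5 Yj g1_i g2_k]]] := twins_stick (esym Eag) Uji (lty j) (nyx j).
have [r1 [r2 [d6 Yk r1_i r2_j]]] := twins_stick (esym Eag) Ukij (lty k) (nyx k).
have [f1_i f2_i] := stick_mem Yi; have [g1_j g2_j] := stick_mem Yj.
have [r1_k r2_k] := stick_mem Yk.
have ? := Wia_meet_eq ij f1_i f1_j eji_i eji_j; have ? := Wia_meet_eq ik f2_i f2_k eki_i eki_k.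
have ? := Wia_meet_eq ij g1_i g1_j eij_i eij_j; have ? := Wia_meet_eq jk g2_j g2_k ekj_j ekj_k.
have ? := Wia_meet_eq ik r1_i r1_k eik_i eik_k; have ? := Wia_meet_eq jk r2_j r2_k ejk_j ejk_k.
subst; exact: (plainhex_of_sticks U (nxy i) (nxy j) (nxy k) Xi Xj Xk Yi Yj Yk).
Qed.

Lemma twins_config cx cy : (forall l, cx l <= nz l) -> (forall l, cy l <= nz l) ->
  twins cx cy -> [\/ bad4cycle W, plainhex W | rainbow_tri W].
Proof.
move=> bx byy [Eag Etop [i nxy]]; have [j [k U]] := ord3_complete i.
have [tx|ntx] := boolP (agrees_corner cx).
  have ty : agrees_corner cy by rewrite -Etop.
  apply: Or33; have [xi|] := ltnP (cx i) (nz i).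
    exact: twins_corner_rainbow_tri Eag tx ty xi nxy.
  move=> ge_xi; have exi : cx i = nz i by apply/eqP; rewrite eqn_leq bx.
  apply: (twins_corner_rainbow_tri (i := i) (esym Eag) ty tx); last by rewrite eq_sym.
  by rewrite ltn_neqAle byy andbT -exi eq_sym.
have below c : (forall l, c l <= nz l) -> ~~ agrees_corner c -> forall l, c l < nz l.
  by move=> bc ntc l; rewrite ltn_neqAle bc andbT; apply: contra ntc => cl; apply/existsP; exists l.
have ltx := below _ bx ntx; have lty := below _ byy ltac:(by rewrite -Etop).
have [exj|nxj] := eqVneq (cx j) (cy j); have [exk|nxk] := eqVneq (cx k) (cy k).
- exact/Or31/(twins_one_diff_bad4cycle Eag U (ltx i) (lty i) nxy exj exk).
- exact/Or33/(twins_two_diff_rainbow_tri Eag U (ltx i) (lty k) nxy exj nxk).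
- exact/Or33/(twins_two_diff_rainbow_tri Eag (uniq3_swap23 U) (ltx i) (lty j) nxy exk nxj).
apply/Or32/(twins_three_diff_plainhex Eag U ltx lty) => l.
by case: (ord3_cases l U) => ->.
Qed.

Lemma agreeing_coord3 i j k a b c : uniq [:: i; j; k] ->
  agreeing (coord3 i j a b c) = Wia W i a :|: Wia W j b :|: Wia W k c.
Proof.
move=> U; apply/setP => w; rewrite !in_setU !inE.
rewrite (exists_coord3 (fun l v => crd w l == v) a b c U).
by rewrite !andb_orr orbA.
Qed.

Lemma agrees_corner_coord3 i j k a b c : uniq [:: i; j; k] ->
  agrees_corner (coord3 i j a b c) = [|| a == nz i, b == nz j | c == nz k].
Proof. move=> U; exact: (exists_coord3 (fun l v => v == nz l) a b c U). Qed.

Lemma nonlandmark_coord3 i j k a b c : uniq [:: i; j; k] ->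
  a <= nz i -> b <= nz j -> c <= nz k -> [|| a < nz i, b < nz j | c < nz k] ->
  (forall w, w \in Wia W i a -> w \in Wia W j b -> w \notin Wia W k c) ->
  nonlandmark (coord3 i j a b c).
Proof.
move=> U ha hb hc lt nW; have [ea eb ec] := coord3E a b c U.
split; first by move=> l; case: (ord3_cases l U) => ->; rewrite ?ea ?eb ?ec.
  by case/or3P: lt => ?; [exists i; rewrite ea | exists j; rewrite eb | exists k; rewrite ec].
move=> w wW Ew; have inW l : w \in Wia W l (coord3 i j a b c l) by rewrite inE wW Ew eqxx.
by move: (inW k); rewrite ec; apply/negP/nW; [rewrite -ea | rewrite -eb].
Qed.

Hypotheses (n1_ge2 : 2 <= n1) (n2_ge2 : 2 <= n2) (n3_ge2 : 2 <= n3).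

Lemma twins_not_resolving cx cy : nonlandmark cx -> nonlandmark cy -> twins cx cy ->
  ~ resolving K' W'.
Proof.
move=> Nx Ny [Eag Etop [l nxy]] R.
have [[bx _ _] [byy _ _]] := (Nx, Ny).
set x := vtx_of n1 n2 n3 cx; set y := vtx_of n1 n2 n3 cy.
have Ex : crd x =1 cx by move=> l'; rewrite crd_vtx_of.
have Ey : crd y =1 cy by move=> l'; rewrite crd_vtx_of.
have xW : x \notin W' := vtx_of_notin Nx.
have yW : y \notin W' := vtx_of_notin Ny.
have [z zW] : exists2 z, z \in W' & gdist K' x z <> gdist K' y z.
  by apply: R => // Exy; move: nxy; rewrite -Ex -Ey Exy eqxx.
have xz : x != z by apply: contraNneq xW => ->.
have yz : y != z by apply: contraNneq yW => ->.
rewrite !gdist_Kadj //.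
case/setUP: zW => [/imsetP[w wW ->]|/set1P->].
  by rewrite (Kadj_emb Ex wW) (Kadj_emb Ey wW) Eag.
by rewrite (Kadj_ucorner Ex) (Kadj_ucorner Ey) Etop.
Qed.

Lemma resolving_of_no_twins :
  (forall cx cy, (forall l, cx l <= nz l) -> (forall l, cy l <= nz l) -> ~ twins cx cy) ->
  resolving K' W'.
Proof.
move=> noT x y xW yW nxy.
case: (boolP [exists z in W', Kadj x z != Kadj y z]) => [/exists_inP[z zW Kz]|].
  have xz : x != z by apply: contraNneq xW => ->.
  have yz : y != z by apply: contraNneq yW => ->.
  by exists z => //; rewrite !gdist_Kadj //; move: Kz; case: (Kadj x z); case: (Kadj y z).
rewrite negb_exists_in => /forall_inP sameK; case: (noT (crd x) (crd y) (crd_le x) (crd_le y)).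
have /existsP[l nl] : [exists l, crd x l != crd y l].
  apply: contraT; rewrite negb_exists => /forallP Exy; case: nxy.
  by apply: crd_inj => l; apply/eqP; rewrite -[_ == _]negbK Exy.
split; last by exists l.
  apply/setP => w; case: (boolP (w \in W)) => wW; last by rewrite !inE (negbTE wW).
  have /negPn/eqP := sameK (emb w) ltac:(by rewrite in_setU imset_f).
  by rewrite (Kadj_emb (frefl _) wW) (Kadj_emb (frefl _) wW) => /negb_inj.
have /negPn/eqP := sameK (ucorner n1 n2 n3) ltac:(by rewrite !inE eqxx orbT).
by rewrite (Kadj_ucorner (frefl _)) (Kadj_ucorner (frefl _)) => /negb_inj.
Qed.

Lemma bad4cycle_not_resolving : bad4cycle W -> ~ resolving K' W'.
Proof.
case=> w1 [w2 [w3 [w4 [i [j [k [Hu _ U [[a [Ha _]] [a' [Ha' _]]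
  [_ [[b [<- _]] [w2b w3b]]] [_ [[c [<- _]] [w4c w1c]]]]]]]]]]].
have [ij ik _] := uniq3_neq U.
move: Hu; rewrite /= !in_cons !negb_or.
move=> /and4P[/and4P[d12 d13 _ _] /and3P[d23 _ _] /andP[d34 _] _].
have [w1a w2a] := stick_mem Ha; have [w3a' w4a'] := stick_mem Ha'.
have naa : a != a'.
  by apply/eqP => eaa; move: w3a'; rewrite -eaa Ha => /set2P[] e; [move: d13 | move: d23];
     rewrite e eqxx.
have ha := Wia_lt w1a; have ha' := Wia_lt w3a'; have hb := Wia_lt w2b; have hc := Wia_lt w1c.
have [ea _ _] := coord3E a b c U; have [ea' _ _] := coord3E a' b c U.
apply: (twins_not_resolving (cx := coord3 i j a b c) (cy := coord3 i j a' b c)).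
- apply: (nonlandmark_coord3 U (ltnW ha) (ltnW hb) (ltnW hc)) => [|w wa wb]; first by rewrite ha.
  apply/negP => wc; move: d12.
  by rewrite -(Wia_meet_eq ik wa wc w1a w1c) (Wia_meet_eq ij wa wb w2a w2b) eqxx.
- apply: (nonlandmark_coord3 U (ltnW ha') (ltnW hb) (ltnW hc)) => [|w wa wb]; first by rewrite ha'.
  apply/negP => wc; move: d34.
  by rewrite -(Wia_meet_eq ij wa wb w3a' w3b) (Wia_meet_eq ik wa wc w4a' w4c) eqxx.
split; last by exists i; rewrite ea ea'.
  rewrite !(agreeing_coord3 _ _ _ U) -!setUA Ha Ha' !setU2_absorb //;
  by rewrite in_setU ?w1c ?w2b ?w3b ?w4c ?orbT.
by rewrite !(agrees_corner_coord3 _ _ _ U) !ltn_eqF.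
Qed.

Lemma plainhex_not_resolving : plainhex W -> ~ resolving K' W'.
Proof.
case=> w1 [w2 [w3 [w4 [w5 [w6 [i [j [k [Hu _ U [[a [Ha _]] [a' [Ha' _]]
  [b [Hb _]] [b' [Hb' _]] [[c [Hc _]] [c' [Hc' _]]]]]]]]]]]]].
move: Hu; rewrite /= !in_cons !negb_or => /and5P[/and5P[_ _ d14 d15 /andP[d16 _]]
  /and5P[_ d24 d25 d26 _] /and4P[d34 d35 _ _] _ _].
have [w1a _] := stick_mem Ha; have [w4a' _] := stick_mem Ha'; have [w2b _] := stick_mem Hb.
have [w5b' _] := stick_mem Hb'; have [w3c _] := stick_mem Hc; have [w6c' _] := stick_mem Hc'.
have ha := Wia_lt w1a; have ha' := Wia_lt w4a'; have hb := Wia_lt w2b.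
have hb' := Wia_lt w5b'; have hc := Wia_lt w3c; have hc' := Wia_lt w6c'.
have naa : a != a'.
  by apply/eqP => eaa; move: w4a'; rewrite -eaa Ha => /set2P[] e; [move: d14 | move: d24];
     rewrite e eqxx.
have [ea _ _] := coord3E a b' c U; have [ea' _ _] := coord3E a' b c' U.
apply: (twins_not_resolving (cx := coord3 i j a b' c) (cy := coord3 i j a' b c')).
- apply: (nonlandmark_coord3 U (ltnW ha) (ltnW hb') (ltnW hc)) => [|w]; first by rewrite ha.
  by rewrite Ha Hb' => /(set2_disjoint d15 d16 d25 d26)/negP.
- apply: (nonlandmark_coord3 U (ltnW ha') (ltnW hb) (ltnW hc')) => [|w]; first by rewrite ha'.
  by rewrite Ha' Hb => wa' /(set2_disjoint d24 d25 d34 d35); rewrite wa'.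
split; last by exists i; rewrite ea ea'.
  rewrite !(agreeing_coord3 _ _ _ U) Ha Hb Hc Ha' Hb' Hc'; apply/setP => w.
  by rewrite !in_setU !in_set1; case: (w == w1); case: (w == w2); case: (w == w3);
     case: (w == w4); case: (w == w5); case: (w == w6); rewrite ?orbT.
by rewrite !(agrees_corner_coord3 _ _ _ U) !ltn_eqF.
Qed.

Lemma rainbow_tri_not_resolving : rainbow_tri W -> ~ resolving K' W'.
Proof.
case=> w1 [w2 [w3 [i [j [k [_ _ U [[a [Ha _]] [b [Hb _]] [_ [[c [<- _]] [w1c w3c]]]]]]]]]].
have [w1a _] := stick_mem Ha; have [w2b _] := stick_mem Hb.
have ha := Wia_lt w1a; have hb := Wia_lt w2b; have hc := Wia_lt w1c.
have [ea _ _] := coord3E a (nz j) c U; have [ea' _ _] := coord3E (nz i) b c U.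
apply: (twins_not_resolving (cx := coord3 i j a (nz j) c) (cy := coord3 i j (nz i) b c)).
- apply: (nonlandmark_coord3 U (ltnW ha) (leqnn _) (ltnW hc)) => [|w _]; first by rewrite ha.
  by rewrite Wia_top inE.
- apply: (nonlandmark_coord3 U (leqnn _) (ltnW hb) (ltnW hc)) => [|w]; first by rewrite hb orbT.
  by rewrite Wia_top inE.
split; last by exists i; rewrite ea ea' ltn_eqF.
  rewrite !(agreeing_coord3 _ _ _ U) !Wia_top setU0 set0U Ha Hb setU2_absorbl //.
  by rewrite [[set w2; w3]]setUC setU2_absorbl.
by rewrite !(agrees_corner_coord3 _ _ _ U) !eqxx !orbT.
Qed.

End Landmarks.

Theorem mainTheorem4 (n1 n2 n3 : nat) (W : {set vtx n1 n2 n3}) :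
  3 <= n1 -> 3 <= n2 -> n1 <= n3 -> n2 <= n3 ->
  basic_landmark W ->
  (resolving (@Kadj n1.+1 n2.+1 n3.+1)
     ([set emb w | w in W] :|: [set ucorner n1 n2 n3])
   <-> (~ bad4cycle W /\ ~ plainhex W /\ ~ rainbow_tri W)).
Proof.
move=> n1_ge3 n2_ge3 le13 _ [_ [ge2 le1]].
have [g1 g2] := (ltnW n1_ge3, ltnW n2_ge3); have g3 : 2 <= n3 := leq_trans g1 le13.
split=> [R | [nb [nh nr]]].
  split; [|split] => [/(bad4cycle_not_resolving le1 g1 g2 g3) | /(plainhex_not_resolving g1 g2 g3)
                     | /(rainbow_tri_not_resolving g1 g2 g3)]; exact.
apply: resolving_of_no_twins => // cx cy bx byy T.
by case: (twins_config ge2 le1 bx byy T).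
Qed.
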